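(* Let $M$ be a root of unity toric frame of $\mathcal F$, $k\in[1,N]$, and $g=(n_1,\dots,n_N)\in\mathbb Z^N$ such that $\Lambda_M(g,e_j)\equiv0\pmod\ell$ for all $j\neq k$ and $n_k=0$. Then for each sign $s\in\{+,-\}$ there is a unique ($\mathbb Q(\varepsilon^{1/2})$-algebra) automorphism $\rho$ of $\mathcal F$ such that $\rho(M(e_k))=M(e_k)+M(e_k+sg)$ and $\rho(M(e_j))=M(e_j)$ for $j\ne k$.
   Context: Let $\ell$ be a positive integer, $\mathbb Z_\ell=\mathbb Z/\ell\mathbb Z$, $\varepsilon^{1/2}\in\mathbb C$ a primitive $\ell$-th root of unity, $\mathcal A^{1/2}_\varepsilon=\mathbb Z[\varepsilon^{1/2}]$, $\varepsilon^{a/2}=(\varepsilon^{1/2})^a$ for $a\in\mathbb Z_\ell$; $e_1,\dots,e_N$ is the standard basis of $\mathbb Z^N$. For a skew-symmetric bilinear form $\Lambda:\mathbb Z^N\times\mathbb Z^N\to\mathbb Z_\ell$, $\mathcal T_\varepsilon(\Lambda)$ is the $\mathcal A^{1/2}_\varepsilon$-algebra with basis $\{X^f\}_{f\in\mathbb Z^N}$ and $X^fX^g=\varepsilon^{\Lambda(f,g)/2}X^{f+g}$. A root of unity toric frame of a division algebra $\mathcal F$ over $\mathbb Q(\varepsilon^{1/2})$ is a map $M:\mathbb Z^N\to\mathcal F$ such that for some (unique) skew-symmetric $\Lambda=:\Lambda_M$ there is an injective $\mathcal A^{1/2}_\varepsilon$-algebra map $\phi:\mathcal T_\varepsilon(\Lambda)\to\mathcal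 F$, $\phi(X^f)=M(f)$ for all $f$, with $\mathcal F$ the skew field of fractions of its image. *)

From HB Require Import structures.
From mathcomp Require Import all_boot all_order all_algebra.
Set Implicit Arguments. Unset Strict Implicit. Unset Printing Implicit Defensive.
Import Order.TTheory GRing.Theory Num.Theory.
Local Open Scope ring_scope.

(* Z^N is modelled as integer row vectors 'rV[int]_N; e_j = evec j. *)
Definition evec (N : nat) (j : 'I_N) : 'rV[int]_N := delta_mx 0 j.

(* A bilinear form Z^N x Z^N -> Z_ell, lifted to an integer matrix L:
   Lambda(f,g) = f L g^T (read modulo ell).  Skew-symmetry mod ell. *)
Definition bform (N : nat) (L : 'M[int]_N) (f g : 'rV[int]_N) : int :=
  (f *m L *m g^T) 0 0.
Definition skew_mod (ell N : nat) (L : 'M[int]_N) : Prop :=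
  forall i j, (ell%:Z %| L i j + L j i)%Z.

(* K is (a copy of) Q(eps^{1/2}): a characteristic-0 field generated over Q
   by z = eps^{1/2}, a primitive ell-th root of unity, ell > 0. *)
Definition is_Qzeta (K : fieldType) (ell : nat) (z : K) : Prop :=
  [/\ (0 < ell)%N, ell.-primitive_root z, [pchar K] =i pred0 &
      forall x : K, exists p : {poly rat}, x = (map_poly ratr p).[z]].

Definition division_ring (K : fieldType) (F : unitAlgType K) : Prop :=
  forall x : F, x != 0 -> x \is a GRing.unit.

Section Frames.
Variables (K : fieldType) (F : unitAlgType K) (ell N : nat) (z : K).

Definition Acoef (p : {poly int}) : K := (map_poly intr p).[z].

(* image of phi : T_eps(Lambda) -> F, phi(X^f) = M f, A-linear *)
Definition in_frame_image (M : 'rV[int]_N -> F) (x : F) : Prop :=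
  exists n (c : 'I_n -> {poly int}) (f : 'I_n -> 'rV[int]_N),
    x = \sum_(i < n) Acoef (c i) *: M (f i).

(* injectivity of phi: the M f (f in Z^N) are A-linearly independent *)
Definition frame_lin_indep (M : 'rV[int]_N -> F) : Prop :=
  forall n (c : 'I_n -> {poly int}) (f : 'I_n -> 'rV[int]_N),
    injective f -> \sum_(i < n) Acoef (c i) *: M (f i) = 0 ->
    forall i, Acoef (c i) = 0.

(* M is a root of unity toric frame with form Lambda = bform L:
   phi is an A-algebra map (M 0 = 1, M f M g = eps^{Lambda(f,g)/2} M(f+g)),
   injective, and F is the skew field of fractions of its image. *)
Definition toric_frame_with (M : 'rV[int]_N -> F) (L : 'M[int]_N) : Prop :=
  [/\ skew_mod ell L, M 0 = 1,
      (forall f g, M f * M g = z ^ (bform L f g) *: M (f + g)),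
      frame_lin_indep M &
      forall x : F, exists a b, [/\ in_frame_image M a, in_frame_image M b,
                                    b != 0 & x = a * b^-1]].

Definition alg_auto (rho : F -> F) : Prop :=
  [/\ {morph rho : x y / x + y}, {morph rho : x y / x * y}, rho 1 = 1,
      (forall (a : K) x, rho (a *: x) = a *: rho x) & bijective rho].

End Frames.

(* Write E = M e_k, G = M g and X = E + M (e_k + g) = E Y, where Y = 1 + c G.
   Since Lambda(g, h) = 0 mod ell whenever h_k = 0, G commutes with every
   monomial of k-degree 0, hence so does Y, and conjugation by X agrees with
   conjugation by E on the centraliser of G.  Therefore f |-> M f E^-f_k X^f_k
   obeys the same twisted multiplication rule as M; it extends K-linearly to the
   quantum torus and, through Ore fractions, to a K-algebra endomorphism of F.
   It is injective because multiplying a relation by X^-m splits it into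
   k-homogeneous pieces, surjective because E is the image of E Y^-1, and unique
   because the M e_j generate F as a division algebra. *)

From HB Require Import structures.
From mathcomp Require Import all_boot all_order all_algebra.
From mathcomp Require Import ring.
From Stdlib Require Import ClassicalEpsilon.
Set Implicit Arguments. Unset Strict Implicit. Unset Printing Implicit Defensive.
Import Order.TTheory GRing.Theory Num.Theory.
Local Open Scope ring_scope.

Lemma expz_dvd_eq1 (R : unitRingType) (ell : nat) (z : R) (a : int) :
  z ^+ ell = 1 -> (ell%:Z %| a)%Z -> z ^ a = 1.
Proof. by move=> z_ell /divzK <-; rewrite mulrC -exprz_exp -exprnP z_ell exp1rz. Qed.

Section CharZero.
Variables (K : fieldType) (z : K).
Hypotheses (K_char0 : [pchar K] =i pred0)
  (K_gen : forall x : K, exists p : {poly rat}, x = (map_poly ratr p).[z]).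

Lemma intrf_neq0 (a : int) : a != 0 -> (a%:~R : K) != 0.
Proof.
have natf_eq0 n : (n%:R : K) == 0 = (n == 0)%N by move: n; apply/pcharf0P.
by case: a => n; rewrite ?NegzE ?mulrNz ?oppr_eq0 -pmulrn natf_eq0.
Qed.

Lemma ratr_common_denom (rs : seq rat) : exists (a : int) (m : rat -> int),
  a != 0 /\ forall r, r \in rs -> a%:~R * (ratr r : K) = (m r)%:~R.
Proof.
elim: rs => [|r rs [a [m [a0 hm]]]]; first by exists 1, (fun _ => 0).
exists (a * denq r), (fun y => if y == r then a * numq r else denq r * m y); split.
  by rewrite mulf_neq0 ?denq_neq0.
move=> y; rewrite in_cons; case: eqP => [-> _|_ /= yrs].
  by rewrite /ratr !intrM -mulrA [_%:~R * (_ / _)]mulrC divfK ?intrf_neq0 ?denq_neq0.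
by rewrite !intrM [a%:~R * _]mulrC -mulrA hm.
Qed.

Lemma Acoef_denom (x : K) : exists (a : int) (q : {poly int}),
  a != 0 /\ a%:~R * x = Acoef z q.
Proof.
have [p ->] := K_gen x; have [a [m [a0 hm]]] := ratr_common_denom p.
pose q := \poly_(i < size p) m p`_i; exists a, q; split => //.
have size_q : (size (map_poly (intr : int -> K) q) <= size p)%N.
  exact: leq_trans (size_poly _ _) (size_poly _ _).
rewrite /Acoef (horner_coef_wide z size_q) /map_poly.
rewrite (horner_coef_wide z (size_poly _ _)) mulr_sumr; apply: eq_bigr => i _.
rewrite !coef_poly ltn_ord mulrA hm ?mem_nth //.
case: ifP => // /negbT; rewrite -leqNgt => hi.
have : q`_i = 0 by rewrite nth_default.
by rewrite coef_poly ltn_ord => ->; rewrite mulr0z.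
Qed.

Lemma Acoef_common_denom (xs : seq K) : exists (a : int) (q : K -> {poly int}),
  a != 0 /\ forall x, x \in xs -> a%:~R * x = Acoef z (q x).
Proof.
have AcoefM p p' : Acoef z (p * p') = Acoef z p * Acoef z p'.
  by rewrite /Acoef rmorphM hornerM.
have AcoefC c : Acoef z c%:P = c%:~R by rewrite /Acoef map_polyC hornerC.
elim: xs => [|x xs [a [q [a0 hq]]]]; first by exists 1, (fun _ => 0).
have [b [p [b0 hp]]] := Acoef_denom x.
exists (a * b), (fun y => if y == x then a%:P * p else b%:P * q y); split.
  by rewrite mulf_neq0.
move=> y; rewrite in_cons; case: eqP => [-> _|_ /= yxs].
  by rewrite AcoefM AcoefC intrM -mulrA hp.
by rewrite AcoefM AcoefC intrM -hq //; ring.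
Qed.

End CharZero.

Section BilinearForm.
Variables (N : nat) (L : 'M[int]_N).

Lemma bformE f h : bform L f h = \sum_(j < N) (f *m L) 0 j * h 0 j.
Proof. by rewrite /bform mxE; apply: eq_bigr => j _; rewrite [h^T _ _]mxE. Qed.

Lemma bform_evec f j : bform L f (evec j) = (f *m L) 0 j.
Proof.
rewrite bformE (bigD1 j) //= big1 ?addr0 => [|i /negbTE ij].
  by rewrite [evec _ _ _]mxE !eqxx mulr1.
by rewrite [evec _ _ _]mxE ij andbF mulr0.
Qed.

Lemma bformNl f h : bform L (- f) h = - bform L f h.
Proof. by rewrite /bform !mulNmx mxE. Qed.

Lemma bformNr f h : bform L f (- h) = - bform L f h.
Proof. by rewrite /bform linearN /= mulmxN mxE. Qed.

Lemma bform_skew_dvd ell f h : skew_mod ell L ->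
  (ell%:Z %| bform L f h + bform L h f)%Z.
Proof.
move=> L_skew; rewrite !bformE.
have -> : \sum_(j < N) (h *m L) 0 j * f 0 j
   = \sum_(j < N) \sum_(i < N) f 0 j * h 0 i * L i j.
  apply: eq_bigr => j _; rewrite mxE big_distrl; apply: eq_bigr => i _ /=.
  by rewrite mulrC mulrA [f 0 j * _]mulrC.
have -> : \sum_(j < N) (f *m L) 0 j * h 0 j
   = \sum_(j < N) \sum_(i < N) f 0 j * h 0 i * L j i.
  rewrite exchange_big; apply: eq_bigr => j _; rewrite mxE big_distrl.
  by apply: eq_bigr => i _ /=; rewrite mulrAC.
rewrite -big_split; apply: rpred_sum => j _; rewrite -big_split.
by apply: rpred_sum => i _ /=; rewrite -mulrDr dvdz_mull.
Qed.

End BilinearForm.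

Lemma scalerMM (R : pzRingType) (A : algType R) (a b : R) (x y : A) :
  (a *: x) * (b *: y) = (a * b) *: (x * y).
Proof. by rewrite -scalerAl -scalerAr scalerA. Qed.

Lemma inj_surj_bijective (A B : Type) (f : A -> B) :
  injective f -> (forall y, exists x, f x = y) -> bijective f.
Proof.
move=> f_inj f_surj.
pose h y := proj1_sig (constructive_indefinite_description _ (f_surj y)).
have hK : cancel h f by move=> y; rewrite /h; case: constructive_indefinite_description.
by exists h => // x; apply: f_inj; rewrite hK.
Qed.

Lemma conjM (R : unitRingType) (U V W : R) : U \is a GRing.unit -> V \is a GRing.unit ->
  U * V * W * (U * V)^-1 = U * (V * W * V^-1) * U^-1.
Proof. by move=> U_unit V_unit; rewrite invrM // !mulrA. Qed.

Section AlgEndo.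
Variables (K : fieldType) (F : unitAlgType K).

Definition alg_endo (rho : F -> F) := [/\ {morph rho : x y / x + y},
  {morph rho : x y / x * y}, rho 1 = 1 & forall (a : K) x, rho (a *: x) = a *: rho x].

Lemma alg_autoP rho : alg_auto rho <-> alg_endo rho /\ bijective rho.
Proof. by split=> [[? ? ? ? ?]|[[? ? ? ?] ?]]. Qed.

Lemma alg_endo0 rho : alg_endo rho -> rho 0 = 0.
Proof. by case=> rhoD _ _ _; apply: (addrI (rho 0)); rewrite -rhoD !addr0. Qed.

Lemma alg_endoV rho x : alg_endo rho -> x \is a GRing.unit -> rho x^-1 = (rho x)^-1.
Proof.
case=> _ rhoM rho1 _ x_unit.
have rhoxV : rho x * rho x^-1 = 1 by rewrite -rhoM mulrV.
have rhoVx : rho x^-1 * rho x = 1 by rewrite -rhoM mulVr.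
have rhox_unit : rho x \is a GRing.unit by apply/unitrP; exists (rho x^-1).
by rewrite -[LHS]mul1r -(mulVr rhox_unit) -mulrA rhoxV mulr1.
Qed.

End AlgEndo.

Section Frame.
Variables (K : fieldType) (F : unitAlgType K) (N : nat) (z : K).
Variables (M : 'rV[int]_N -> F) (L : 'M[int]_N).
Hypotheses (z_neq0 : z != 0) (M0 : M 0 = 1)
  (MM : forall f h, M f * M h = z ^ bform L f h *: M (f + h)).
Hypotheses (K_char0 : [pchar K] =i pred0)
  (K_gen : forall x : K, exists p : {poly rat}, x = (map_poly ratr p).[z])
  (M_indep : frame_lin_indep z M).
Hypotheses (F_div : division_ring F)
  (M_frac : forall x : F, exists a b, [/\ in_frame_image z M a,
     in_frame_image z M b, b != 0 & x = a * b^-1]).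

Local Notation lattice := 'rV[int]_N.

Lemma M_opp_mul f : M (- f) * M f = z ^ bform L f (- f) *: 1.
Proof. by rewrite MM addNr M0 bformNl bformNr. Qed.

Lemma M_mul_opp f : M f * M (- f) = z ^ bform L f (- f) *: 1.
Proof. by rewrite MM subrr M0. Qed.

Lemma M_unit f : M f \is a GRing.unit.
Proof.
apply/unitrP; exists ((z ^ bform L f (- f))^-1 *: M (- f)).
by rewrite -scalerAl -scalerAr M_opp_mul M_mul_opp scalerA mulVf ?expfz_neq0 ?scale1r.
Qed.

Lemma M_neq0 f : M f != 0.
Proof. by apply: contraTneq (M_unit f) => ->; rewrite unitr0. Qed.

Lemma M_inv f : (M f)^-1 = (z ^ bform L f (- f))^-1 *: M (- f).
Proof.
rewrite -[RHS]mul1r -(mulVr (M_unit f)) -mulrA -scalerAr M_mul_opp.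
by rewrite scalerA mulVf ?expfz_neq0 // scale1r mulr1.
Qed.

Definition monomial f (W : F) := exists c : K, W = c *: M f.

Lemma monomial_M f : monomial f (M f).
Proof. by exists 1; rewrite scale1r. Qed.

Lemma monomialM f h U W : monomial f U -> monomial h W -> monomial (f + h) (U * W).
Proof. by move=> [c ->] [d ->]; exists (c * d * z ^ bform L f h); rewrite scalerMM MM scalerA. Qed.

Lemma monomialV f U : monomial f U -> U \is a GRing.unit -> monomial (- f) U^-1.
Proof.
move=> [c ->] U_unit.
have c_neq0 : c != 0 by apply: contraTneq U_unit => ->; rewrite scale0r unitr0.
rewrite invrZ ?unitfE ?M_unit // M_inv scalerA.
by exists (c^-1 * (z ^ bform L f (- f))^-1).
Qed.

Lemma monomial_comm f h U W : monomial f U -> monomial h W ->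
  U * W = z ^ (bform L f h - bform L h f) *: (W * U).
Proof.
move=> [c ->] [d ->]; rewrite !scalerMM !MM [h + f]addrC !scalerA.
rewrite expfzDr // -invr_expz; congr (_ *: _).
by rewrite [RHS]mulrAC divfK ?expfz_neq0 //; ring.
Qed.

Lemma monomialXz f U (n : int) : monomial f U -> U \is a GRing.unit ->
  monomial (n *: f) (U ^ n).
Proof.
move=> U_mon U_unit.
have monX m : monomial (m%:Z *: f) (U ^+ m).
  elim: m => [|m IHm]; first by exists 1; rewrite scale0r M0 scale1r.
  by rewrite exprSr intS scalerDl scale1r addrC; apply: monomialM.
case: n => m; first by rewrite -exprnP; apply: monX.
rewrite NegzE scaleNr -invr_expz -exprnP.
by apply: monomialV (monX _) _; rewrite unitrX.
Qed.

Definition frame_sum (phi : lattice -> F) (s : seq (K * lattice)) : F :=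
  \sum_(p <- s) p.1 *: phi p.2.

Definition torus (x : F) := exists s, x = frame_sum M s.

Definition frame_prods (s t : seq (K * lattice)) :=
  [seq (p.1 * q.1 * z ^ bform L p.2 q.2, p.2 + q.2) | p <- s, q <- t].

Lemma frame_sumM (phi : lattice -> F) s t :
  (forall f h, phi f * phi h = z ^ bform L f h *: phi (f + h)) ->
  frame_sum phi s * frame_sum phi t = frame_sum phi (frame_prods s t).
Proof.
move=> phiM; rewrite /frame_sum big_distrl big_allpairs_dep /=.
apply: eq_bigr => p _; rewrite big_distrr; apply: eq_bigr => q _ /=.
by rewrite scalerMM phiM scalerA.
Qed.

Lemma frame_sum_cat phi s t : frame_sum phi (s ++ t) = frame_sum phi s + frame_sum phi t.
Proof. exact: big_cat. Qed.

Lemma frame_sumZ phi a s :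
  frame_sum phi [seq (a * p.1, p.2) | p <- s] = a *: frame_sum phi s.
Proof. by rewrite /frame_sum big_map scaler_sumr; apply: eq_bigr => p _; rewrite scalerA. Qed.

Lemma frame_sum1 phi f : frame_sum phi [:: (1, f)] = phi f.
Proof. by rewrite /frame_sum big_seq1 scale1r. Qed.

Lemma torusD x y : torus x -> torus y -> torus (x + y).
Proof. by move=> [s ->] [t ->]; exists (s ++ t); rewrite frame_sum_cat. Qed.

Lemma torusM x y : torus x -> torus y -> torus (x * y).
Proof. by move=> [s ->] [t ->]; exists (frame_prods s t); rewrite frame_sumM. Qed.

Lemma torusZ a x : torus x -> torus (a *: x).
Proof. by move=> [s ->]; exists [seq (a * p.1, p.2) | p <- s]; rewrite frame_sumZ. Qed.

Lemma torus_M f : torus (M f).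
Proof. by exists [:: (1, f)]; rewrite frame_sum1. Qed.

Lemma torus1 : torus 1.
Proof. by rewrite -M0; apply: torus_M. Qed.

Lemma big_group_by (I T : eqType) (s : seq I) (key : I -> T) (G : I -> F) :
  \sum_(p <- s) G p = \sum_(d <- undup (map key s)) \sum_(p <- s | key p == d) G p.
Proof.
rewrite (exchange_big_dep xpredT) //=; apply: eq_big_seq => p ps.
rewrite -big_filter (@eq_filter _ _ (pred1 (key p))) => [|d]; last exact: eq_sym.
by rewrite filter_pred1_uniq ?undup_uniq ?mem_undup ?map_f // big_seq1.
Qed.

Lemma frame_sum_group phi s : frame_sum phi s =
  \sum_(h <- undup (map snd s)) (\sum_(p <- s | p.2 == h) p.1) *: phi h.
Proof.
rewrite /frame_sum (big_group_by s snd); apply: eq_bigr => h _.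
by rewrite scaler_suml; apply: eq_bigr => p /eqP <-.
Qed.

Lemma frame_indep_scalar (hs : seq lattice) (c : lattice -> K) : uniq hs ->
  \sum_(h <- hs) c h *: M h = 0 -> forall h, h \in hs -> c h = 0.
Proof.
move=> hs_uniq sum_eq0 h h_hs.
have [a [q [a_neq0 hq]]] := Acoef_common_denom K_char0 K_gen (map c hs).
have nth_inj : injective (fun i : 'I_(size hs) => nth 0 hs i).
  by move=> i j /eqP; rewrite nth_uniq // => /eqP; apply: val_inj.
have sumA_eq0 : \sum_(i < size hs) Acoef z (q (c (nth 0 hs i))) *: M (nth 0 hs i) = 0.
  rewrite -(big_mkord xpredT (fun i => Acoef z (q (c (nth 0 hs i))) *: M (nth 0 hs i))).
  rewrite -(big_nth 0 xpredT (fun h => Acoef z (q (c h)) *: M h)) big_seq.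
  rewrite (eq_bigr (fun h => a%:~R *: (c h *: M h))) => [|y y_hs]; last first.
    by rewrite -hq ?map_f // scalerA.
  by rewrite -big_seq -scaler_sumr sum_eq0 scaler0.
have h_idx : (index h hs < size hs)%N by rewrite index_mem.
have := M_indep nth_inj sumA_eq0 (Ordinal h_idx); rewrite /= nth_index // -hq ?map_f //.
by move/eqP; rewrite mulf_eq0 (negbTE (intrf_neq0 K_char0 a_neq0)) => /eqP.
Qed.

Lemma frame_sum_eq0 phi s : frame_sum M s = 0 -> frame_sum phi s = 0.
Proof.
rewrite !frame_sum_group => sum_eq0; rewrite big1_seq // => h /andP [_ h_s].
by rewrite (frame_indep_scalar (undup_uniq _) sum_eq0 h_s) scale0r.
Qed.

(* [lin phi] maps [M f] to [phi f] K-linearly; it is well defined on the torus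
   by [frame_sum_eq0] and meaningless outside it. *)
Definition frame_rep (x : F) : seq (K * lattice) :=
  epsilon (inhabits [::]) (fun s => x = frame_sum M s).

Definition lin (phi : lattice -> F) (x : F) := frame_sum phi (frame_rep x).

Lemma lin_frame_sum phi s : lin phi (frame_sum M s) = frame_sum phi s.
Proof.
have rep_eq : frame_sum M s = frame_sum M (frame_rep (frame_sum M s)).
  by apply: (epsilon_spec (inhabits [::]) (fun t => frame_sum M s = frame_sum M t)); exists s.
have : frame_sum M (frame_rep (frame_sum M s) ++ [seq (-1 * p.1, p.2) | p <- s]) = 0.
  by rewrite frame_sum_cat frame_sumZ -rep_eq scaleN1r subrr.
move/(frame_sum_eq0 phi); rewrite frame_sum_cat frame_sumZ scaleN1r.
by move/eqP; rewrite subr_eq0 => /eqP.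
Qed.

Lemma linD phi x y : torus x -> torus y -> lin phi (x + y) = lin phi x + lin phi y.
Proof. by move=> [s ->] [t ->]; rewrite -frame_sum_cat !lin_frame_sum frame_sum_cat. Qed.

Lemma linZ phi a x : torus x -> lin phi (a *: x) = a *: lin phi x.
Proof. by move=> [s ->]; rewrite -frame_sumZ !lin_frame_sum frame_sumZ. Qed.

Lemma lin_M phi f : lin phi (M f) = phi f.
Proof. by rewrite -frame_sum1 lin_frame_sum frame_sum1. Qed.

Lemma lin0 phi : lin phi 0 = 0.
Proof. by have := lin_frame_sum phi [::]; rewrite /frame_sum !big_nil. Qed.

Lemma lin_sum phi (I : eqType) (r : seq I) (G : I -> F) :
  (forall i, i \in r -> torus (G i)) ->
  lin phi (\sum_(i <- r) G i) = \sum_(i <- r) lin phi (G i).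
Proof.
elim: r => [|i r IHr] G_torus; first by rewrite !big_nil lin0.
have G_torus_r j : j \in r -> torus (G j) by move=> jr; apply: G_torus; rewrite in_cons jr orbT.
have r_torus : torus (\sum_(j <- r) G j).
  rewrite big_seq; elim/big_ind: _ => [|u v|j /G_torus_r //].
  - by exists [::]; rewrite /frame_sum big_nil.
  - exact: torusD.
rewrite !big_cons linD ?IHr //; apply: G_torus; exact: mem_head.
Qed.

Lemma torus_frac x : exists a b, [/\ torus a, torus b, b != 0 & x = a * b^-1].
Proof.
have image_torus a : in_frame_image z M a -> torus a.
  move=> [n [c [f ->]]]; exists [seq (Acoef z (c i), f i) | i <- enum 'I_n].
  by rewrite /frame_sum big_map big_enum.
by have [a [b [/image_torus ? /image_torus ? ? ->]]] := M_frac x; exists a, b.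
Qed.

Lemma mulF_neq0 (x y : F) : x != 0 -> y != 0 -> x * y != 0.
Proof.
move=> x_neq0 y_neq0; have : x * y \is a GRing.unit by rewrite unitrMl ?F_div.
by apply: contraTneq => ->; rewrite unitr0.
Qed.

Lemma torus_ore b d : torus b -> torus d -> b != 0 -> d != 0 ->
  exists u v, [/\ torus u, torus v, u != 0, v != 0 & b * u = d * v].
Proof.
move=> b_torus d_torus b_neq0 d_neq0.
have [x [y [x_torus y_torus y_neq0 dVb]]] := torus_frac (d^-1 * b).
have by_dx : b * y = d * x.
  by rewrite -[b](mulVKr (F_div d_neq0)) dVb -!mulrA mulVr ?F_div // mulr1.
exists y, x; split=> //; apply: contraNneq (mulF_neq0 b_neq0 y_neq0) => x0.
by rewrite by_dx x0 mulr0.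
Qed.

Section Extension.
Variable phi : lattice -> F.
Hypotheses (phi0 : phi 0 = 1)
  (phiM : forall f h, phi f * phi h = z ^ bform L f h *: phi (f + h))
  (phi_inj : forall s, frame_sum phi s = 0 -> frame_sum M s = 0).

Local Notation T := (lin phi).

Lemma lin_mul x y : torus x -> torus y -> T (x * y) = T x * T y.
Proof. by move=> [s ->] [t ->]; rewrite frame_sumM // !lin_frame_sum // frame_sumM. Qed.

Lemma lin1 : T 1 = 1.
Proof. by rewrite -[in T _]M0 lin_M. Qed.

Lemma lin_neq0 x : torus x -> x != 0 -> T x != 0.
Proof.
by move=> [s ->]; apply: contraNneq; rewrite lin_frame_sum => /phi_inj ->.
Qed.

Lemma lin_frac_eq a b c d : torus a -> torus b -> torus c -> torus d ->
  b != 0 -> d != 0 -> a * b^-1 = c * d^-1 -> T a * (T b)^-1 = T c * (T d)^-1.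
Proof.
move=> a_torus b_torus c_torus d_torus b_neq0 d_neq0 abcd.
have [u [v [u_torus v_torus u_neq0 v_neq0 buv]]] := torus_ore b_torus d_torus b_neq0 d_neq0.
have auv : a * u = c * v.
  rewrite -(mulKr (F_div b_neq0) u) buv !mulrA abcd -(mulrA c).
  by rewrite mulVr ?F_div // mulr1.
have Tbu : T b * T u = T d * T v by rewrite -!lin_mul // buv.
have Tau : T a * T u = T c * T v by rewrite -!lin_mul // auv.
have [Tb_unit Td_unit] := (F_div (lin_neq0 b_torus b_neq0), F_div (lin_neq0 d_torus d_neq0)).
have [Tu_unit Tv_unit] := (F_div (lin_neq0 u_torus u_neq0), F_div (lin_neq0 v_torus v_neq0)).
by rewrite -[T a](mulrK Tu_unit) -[T c](mulrK Tv_unit) Tau -!mulrA -!invrM // Tbu.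
Qed.

Definition frac_rep x := epsilon (inhabits ((0 : F), (1 : F)))
  (fun ab => [/\ torus ab.1, torus ab.2, ab.2 != 0 & x = ab.1 * ab.2^-1]).

Lemma frac_repP x : let ab := frac_rep x in
  [/\ torus ab.1, torus ab.2, ab.2 != 0 & x = ab.1 * ab.2^-1].
Proof.
apply: (epsilon_spec (inhabits ((0 : F), (1 : F)))
  (fun ab => [/\ torus ab.1, torus ab.2, ab.2 != 0 & x = ab.1 * ab.2^-1])).
by have [a [b frac_ab]] := torus_frac x; exists (a, b).
Qed.

Definition frame_ext x := T (frac_rep x).1 * (T (frac_rep x).2)^-1.

Lemma frame_extE a b : torus a -> torus b -> b != 0 ->
  frame_ext (a * b^-1) = T a * (T b)^-1.
Proof. by move=> ? ? ?; have [? ? ? ?] := frac_repP (a * b^-1); apply: lin_frac_eq. Qed.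

Lemma frame_ext_torus a : torus a -> frame_ext a = T a.
Proof.
by move=> a_torus; have := frame_extE a_torus torus1 (oner_neq0 _); rewrite lin1 !invr1 !mulr1.
Qed.

Lemma frame_extD x y : frame_ext (x + y) = frame_ext x + frame_ext y.
Proof.
have [a [b [a_torus b_torus b_neq0 ->]]] := torus_frac x.
have [c [d [c_torus d_torus d_neq0 ->]]] := torus_frac y.
have [u [v [u_torus v_torus u_neq0 v_neq0 buv]]] := torus_ore b_torus d_torus b_neq0 d_neq0.
have bu_neq0 : b * u != 0 by apply: mulF_neq0.
have bu_torus : torus (b * u) by apply: torusM.
have ab_eq : a * b^-1 = (a * u) * (b * u)^-1 by rewrite invrM ?F_div // mulrA mulrK ?F_div.
have cd_eq : c * d^-1 = (c * v) * (b * u)^-1 by rewrite buv invrM ?F_div // mulrA mulrK ?F_div.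
have [au_torus cv_torus] := (torusM a_torus u_torus, torusM c_torus v_torus).
have aucv_torus : torus (a * u + c * v) by apply: torusD.
by rewrite ab_eq cd_eq -mulrDl !frame_extE // linD // mulrDl.
Qed.

Lemma frame_extM x y : frame_ext (x * y) = frame_ext x * frame_ext y.
Proof.
have [a [b [a_torus b_torus b_neq0 ->]]] := torus_frac x.
have [c [d [c_torus d_torus d_neq0 ->]]] := torus_frac y.
have [e [f [e_torus f_torus f_neq0 bVc]]] := torus_frac (b^-1 * c).
have cf_be : c * f = b * e.
  by rewrite -[c](mulVKr (F_div b_neq0)) bVc -!mulrA mulVr ?F_div // mulr1.
have -> : a * b^-1 * (c * d^-1) = (a * e) * (d * f)^-1.
  by rewrite invrM ?F_div // !mulrA -(mulrA a) bVc !mulrA.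
have Tb_unit := F_div (lin_neq0 b_torus b_neq0).
have Tf_unit := F_div (lin_neq0 f_torus f_neq0).
have TbVc : (T b)^-1 * T c = T e * (T f)^-1.
  rewrite -[T c](mulrK Tf_unit) -lin_mul // cf_be lin_mul //.
  by rewrite !mulrA mulVr // mul1r.
have Td_unit := F_div (lin_neq0 d_torus d_neq0).
have [ae_torus df_torus] := (torusM a_torus e_torus, torusM d_torus f_torus).
have df_neq0 := mulF_neq0 d_neq0 f_neq0.
rewrite !frame_extE // !lin_mul // invrM //.
by rewrite [RHS]mulrA -[T a / T b * T c]mulrA TbVc !mulrA.
Qed.

Lemma frame_extZ (c : K) x : frame_ext (c *: x) = c *: frame_ext x.
Proof.
have [a [b [a_torus b_torus b_neq0 ->]]] := torus_frac x.
have ca_torus : torus (c *: a) by apply: torusZ.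
by rewrite scalerAl !frame_extE // linZ // scalerAl.
Qed.

Lemma frame_ext_endo : alg_endo frame_ext.
Proof.
split; [exact: frame_extD | exact: frame_extM | | exact: frame_extZ].
by rewrite (frame_ext_torus torus1) lin1.
Qed.

Lemma frame_ext_inj : injective frame_ext.
Proof.
have ext_eq0 x : frame_ext x = 0 -> x = 0.
  have [a [b [a_torus b_torus b_neq0 ->]]] := torus_frac x.
  rewrite frame_extE // => Tab0.
  have Ta0 : T a = 0 by rewrite -[T a](divrK (F_div (lin_neq0 b_torus b_neq0))) Tab0 mul0r.
  have [-> | a_neq0] := eqVneq a 0; first by rewrite mul0r.
  by have := lin_neq0 a_torus a_neq0; rewrite Ta0 eqxx.
move=> x y exy; apply/eqP; rewrite -subr_eq0; apply/eqP/ext_eq0.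
by rewrite frame_extD -scaleN1r frame_extZ -exy scaleN1r subrr.
Qed.

Lemma frame_ext_M f : frame_ext (M f) = phi f.
Proof. by rewrite (frame_ext_torus (torus_M f)) lin_M. Qed.

End Extension.

Lemma frame_generated (S : F -> Prop) : S 1 ->
  (forall x y, S x -> S y -> S (x + y)) -> (forall x y, S x -> S y -> S (x * y)) ->
  (forall (a : K) x, S x -> S (a *: x)) -> (forall x, x != 0 -> S x -> S x^-1) ->
  (forall j, S (M (evec j))) -> forall x, S x.
Proof.
move=> S1 SD SM SZ SV S_evec.
have SM_add f h : S (M f) -> S (M h) -> S (M (f + h)).
  have -> : M (f + h) = (z ^ bform L f h)^-1 *: (M f * M h).
    by rewrite MM scalerA mulVf ?expfz_neq0 // scale1r.
  by move=> Sf Sh; apply/SZ/SM.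
have SM_opp f : S (M f) -> S (M (- f)).
  have -> : M (- f) = z ^ bform L f (- f) *: (M f)^-1.
    by rewrite M_inv scalerA mulfV ?expfz_neq0 // scale1r.
  by move=> Sf; apply/SZ/SV => //; apply: M_neq0.
have SM_evecZ j (c : int) : S (M (c *: evec j)).
  have SM_nat n : S (M (n%:Z *: evec j)).
    elim: n => [|n IHn]; first by rewrite scale0r M0.
    by rewrite intS scalerDl scale1r; apply: SM_add.
  by case: c => n; rewrite ?NegzE ?scaleNr; [|apply: SM_opp].
have SM_all f : S (M f).
  rewrite (row_sum_delta f); elim/big_ind: _ => [|x y|j _].
  - by rewrite M0.
  - exact: SM_add.
  - exact: SM_evecZ.
have S0 : S 0 by rewrite -(scale0r 1); apply: SZ.
have S_torus x : torus x -> S x.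
  move=> [s ->]; rewrite /frame_sum; elim/big_ind: _ => [//|u v|p _].
  - exact: SD.
  - exact: SZ.
move=> x; have [a [b [/S_torus Sa /S_torus Sb b_neq0 ->]]] := torus_frac x.
by apply/SM/SV.
Qed.

Lemma alg_endo_eq_evec rho rho' : alg_endo rho -> alg_endo rho' ->
  (forall j, rho (M (evec j)) = rho' (M (evec j))) -> rho =1 rho'.
Proof.
move=> rho_endo rho'_endo eq_evec; have [rD rM r1 rZ] := rho_endo.
have [r'D r'M r'1 r'Z] := rho'_endo.
apply: frame_generated => [|x y ex ey|x y ex ey|a x ex|x x_neq0 ex|//].
- by rewrite r1 r'1.
- by rewrite rD r'D ex ey.
- by rewrite rM r'M ex ey.
- by rewrite rZ r'Z ex.
by rewrite !alg_endoV ?F_div // ex.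
Qed.

Lemma alg_endo_surj rho : alg_endo rho ->
  (forall j, exists x, rho x = M (evec j)) -> forall y, exists x, rho x = y.
Proof.
move=> rho_endo evec_im; have [rD rM r1 rZ] := rho_endo.
apply: frame_generated => [|x y [u <-] [v <-]|x y [u <-] [v <-]|a x [u <-]|x x_neq0 [u ru]|//].
- by exists 1.
- by exists (u + v).
- by exists (u * v).
- by exists (a *: u).
have u_neq0 : u != 0 by apply: contraNneq x_neq0 => u0; rewrite -ru u0 alg_endo0.
by exists u^-1; rewrite alg_endoV ?F_div // ru.
Qed.

Section Mutation.
Variables (ell : nat) (k : 'I_N) (g : lattice).
Hypotheses (z_ell : z ^+ ell = 1) (L_skew : skew_mod ell L)
  (g_orth : forall j, j != k -> (ell%:Z %| bform L g (evec j))%Z) (g_k : g 0 k = 0).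

Local Notation deg f := (f 0 k).
Local Notation E := (M (evec k)).
Local Notation G := (M g).

Lemma deg_evec_k : deg (evec k) = 1.
Proof. by rewrite mxE !eqxx. Qed.

Lemma deg_evec_neq j : j != k -> deg (evec j) = 0.
Proof. by rewrite mxE eqxx eq_sym => /negbTE ->. Qed.

Lemma bform_g_deg0 (h : lattice) : deg h = 0 -> (ell%:Z %| bform L g h)%Z.
Proof.
move=> h_k; rewrite bformE; apply: rpred_sum => j _.
have [->|j_neq_k] := eqVneq j k; first by rewrite h_k mulr0 dvdz0.
by rewrite -bform_evec dvdz_mulr ?g_orth.
Qed.

Lemma bform_deg0_g (h : lattice) : deg h = 0 -> (ell%:Z %| bform L h g)%Z.
Proof. by move=> h_k; have := bform_skew_dvd h g L_skew; rewrite rpredDr ?bform_g_deg0. Qed.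

Lemma comm_G_monomial (h : lattice) W : monomial h W -> deg h = 0 -> GRing.comm G W.
Proof.
move=> W_mon h_k; rewrite /GRing.comm (monomial_comm (monomial_M g) W_mon).
by rewrite (expz_dvd_eq1 z_ell) ?scale1r // rpredB ?bform_g_deg0 ?bform_deg0_g.
Qed.

Lemma comm_G_conj f U W : monomial f U -> U \is a GRing.unit ->
  GRing.comm G W -> GRing.comm G (U * W * U^-1).
Proof.
move=> U_mon U_unit GW; have GU := monomial_comm (monomial_M g) U_mon.
set c := z ^ _ in GU.
have UVG : U^-1 * G = c *: (G * U^-1).
  by rewrite -{1}(mulrK U_unit G) GU -scalerAl -scalerAr !mulrA mulVr // mul1r.
rewrite /GRing.comm !mulrA GU -!scalerAl -!mulrA UVG -!scalerAr; congr (_ *: _).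
by rewrite !mulrA -(mulrA U G) GW !mulrA.
Qed.

Definition mut_Mk := M (evec k) + M (evec k + g).
Definition mut_factor := (M (evec k))^-1 * mut_Mk.
Local Notation X := mut_Mk.
Local Notation Y := mut_factor.

Lemma mut_factorE : exists c, Y = 1 + c *: G.
Proof.
have [c Ec] := monomialM (monomialV (monomial_M (evec k)) (M_unit _)) (monomial_M (evec k + g)).
by exists c; rewrite /mut_factor /mut_Mk mulrDr mulVr ?M_unit // Ec addKr.
Qed.

Lemma mut_MkE : X = E * Y.
Proof. by rewrite /mut_factor mulVKr ?M_unit. Qed.

Lemma mut_Mk_neq0 : X != 0.
Proof.
have [g0|g_neq0] := eqVneq g 0.
  have two_neq0 : (2%:R : K) != 0 by move/pcharf0P: K_char0 => ->.
  rewrite /mut_Mk g0 addr0 -mulr2n -scaler_nat; apply: contra_neq two_neq0.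
  have := @frame_indep_scalar [:: evec k] (fun _ => 2%:R) erefl.
  by rewrite big_seq1 => indep X0; apply: (indep X0 (evec k)); rewrite mem_head.
have ek_neq : evec k != evec k + g.
  by rewrite -{1}[evec k]addr0 (inj_eq (addrI _)) eq_sym.
have := @frame_indep_scalar [:: evec k; evec k + g] (fun _ => 1).
rewrite /= inE ek_neq big_cons big_seq1 !scale1r => indep.
by apply: contra_neq (oner_neq0 K) => X0; apply: (indep erefl X0 (evec k)); rewrite mem_head.
Qed.

Lemma mut_Mk_unit : X \is a GRing.unit.
Proof. exact: F_div mut_Mk_neq0. Qed.

Lemma mut_factor_unit : Y \is a GRing.unit.
Proof. by rewrite /mut_factor unitrMl ?unitrV ?M_unit ?mut_Mk_unit. Qed.

Lemma comm_factor W : GRing.comm G W -> GRing.comm Y W.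
Proof.
move=> GW; have [c ->] := mut_factorE.
by rewrite /GRing.comm mulrDl mulrDr mul1r mulr1 -scalerAl -scalerAr GW.
Qed.

Lemma comm_G_conjEz (n : int) W : GRing.comm G W ->
  GRing.comm G (E ^ n * W * (E ^ n)^-1).
Proof.
apply: comm_G_conj (unitrXz _ (M_unit _)).
exact: monomialXz (monomial_M _) (M_unit _).
Qed.

Lemma conj_mut_Mk W : GRing.comm G W -> X * W * X^-1 = E * W * E^-1.
Proof.
move=> GW; have YW : Y * W = W * Y := comm_factor GW.
by rewrite mut_MkE conjM ?M_unit ?mut_factor_unit // YW mulrK ?mut_factor_unit.
Qed.

Lemma conj_mut_Mkn (m : nat) W : GRing.comm G W ->
  X ^+ m * W * (X ^+ m)^-1 = E ^+ m * W * (E ^+ m)^-1.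
Proof.
elim: m => [|m IHm] GW; first by rewrite !expr0 invr1 mulr1 mul1r.
rewrite !exprS !conjM ?unitrX ?M_unit ?mut_Mk_unit // IHm // conj_mut_Mk //.
by rewrite exprnP; apply: comm_G_conjEz.
Qed.

Lemma conj_mut_Mkz (n : int) W : GRing.comm G W ->
  X ^ n * W * (X ^ n)^-1 = E ^ n * W * (E ^ n)^-1.
Proof.
case: n => m GW; first by rewrite -!exprnP conj_mut_Mkn.
rewrite NegzE -!invr_expz -!exprnP !invrK.
have XpU := unitrX m.+1 mut_Mk_unit; have EpU := unitrX m.+1 (M_unit _).
have GW' : GRing.comm G ((E ^+ m.+1)^-1 * W * E ^+ m.+1).
  by have := comm_G_conjEz (- m.+1%:Z) GW; rewrite -invr_expz invrK -exprnP.
have := conj_mut_Mkn m.+1 GW'; rewrite !mulrA mulrV // mul1r mulrK // => XW'.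
by rewrite -{1}XW' !mulrA mulVr // mul1r divrK.
Qed.

Definition mut_twist (n : int) := (M (evec k)) ^ (- n) * mut_Mk ^ n.
Local Notation D := mut_twist.

Lemma mut_twist_comm n W : GRing.comm G W -> GRing.comm (D n) W.
Proof.
move=> GW; rewrite /GRing.comm /mut_twist -mulrA.
rewrite -{1}(mulrVK (unitrXz n mut_Mk_unit) (X ^ n * W)) conj_mut_Mkz //.
by rewrite -invr_expz !mulrA mulVr ?unitrXz ?M_unit // mul1r.
Qed.

Definition homog (d : int) x :=
  exists s, x = frame_sum M s /\ all (fun p : K * lattice => deg p.2 == d) s.

Lemma homog_torus d x : homog d x -> torus x.
Proof. by move=> [s [-> _]]; exists s. Qed.

Lemma homog_monomial f W : monomial f W -> homog (deg f) W.
Proof. by move=> [c ->]; exists [:: (c, f)]; rewrite /frame_sum big_seq1 /= eqxx. Qed.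

Lemma homogD d x y : homog d x -> homog d y -> homog d (x + y).
Proof.
move=> [s [-> s_d]] [t [-> t_d]]; exists (s ++ t).
by rewrite frame_sum_cat all_cat s_d t_d.
Qed.

Lemma homogZ d (a : K) x : homog d x -> homog d (a *: x).
Proof.
move=> [s [-> s_d]]; exists [seq (a * p.1, p.2) | p <- s]; rewrite frame_sumZ.
by split=> //; rewrite all_map.
Qed.

Lemma homogM d d' x y : homog d x -> homog d' y -> homog (d + d') (x * y).
Proof.
move=> [s [-> s_d]] [t [-> t_d]]; exists (frame_prods s t); split; first exact: frame_sumM.
apply/allP => _ /allpairsP [[p q] [ps qt ->]] /=.
by rewrite mxE (eqP (allP s_d p ps)) (eqP (allP t_d q qt)).
Qed.

Lemma homog1 : homog 0 1.
Proof. by have := homog_monomial (monomial_M 0); rewrite M0 mxE. Qed.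

Lemma mut_factor_homog : homog 0 Y.
Proof.
have [c ->] := mut_factorE; apply: homogD homog1 _.
by rewrite -g_k; apply: homog_monomial; exists c.
Qed.

Lemma mut_twist_homog (m : nat) : homog 0 (D m).
Proof.
elim: m => [|m IHm]; first by rewrite /mut_twist oppr0 !expr0z mulr1; apply: homog1.
have -> : D m.+1 = E^-1 * D m * E * Y.
  rewrite /mut_twist intS opprD exprzDr ?M_unit // addrC exprzDr ?mut_Mk_unit //.
  by rewrite -invr_expz !expr1z {2}mut_MkE !mulrA.
have E_homog := homog_monomial (monomial_M (evec k)).
have EV_homog := homog_monomial (monomialV (monomial_M (evec k)) (M_unit _)).
rewrite deg_evec_k in E_homog; rewrite [(- evec k) 0 k]mxE deg_evec_k in EV_homog.
have := homogM (homogM (homogM EV_homog IHm) E_homog) mut_factor_homog.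
by rewrite !addr0 addNr.
Qed.

Definition mutM (f : lattice) := M f * (M (evec k)) ^ (- deg f) * mut_Mk ^ deg f.

Lemma mutM0 : mutM 0 = 1.
Proof. by rewrite /mutM mxE oppr0 !expr0z M0 !mulr1. Qed.

Lemma mutM_evec_k : mutM (evec k) = X.
Proof.
rewrite /mutM deg_evec_k expr1z -invr_expz expr1z.
by rewrite mulrV ?M_unit // mul1r.
Qed.

Lemma mutM_deg0 (h : lattice) : deg h = 0 -> mutM h = M h.
Proof. by move=> h_k; rewrite /mutM h_k oppr0 !expr0z !mulr1. Qed.

Lemma mutMM f h : mutM f * mutM h = z ^ bform L f h *: mutM (f + h).
Proof.
rewrite /mutM mxE; set a := deg f; set b := deg h.
have GW : GRing.comm G (M h * E ^ (- b)).
  apply: (comm_G_monomial (monomialM (monomial_M h) (monomialXz _ (monomial_M _) (M_unit _)))).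
  by rewrite mxE [in X in _ + X]mxE deg_evec_k mulr1 subrr.
have DW := mut_twist_comm a GW.
have -> : M f * E ^ (- a) * X ^ a * (M h * E ^ (- b) * X ^ b) =
          M f * (D a * (M h * E ^ (- b))) * X ^ b by rewrite /mut_twist !mulrA.
rewrite DW /mut_twist !mulrA MM -!scalerAl; congr (_ *: _).
rewrite -(mulrA _ (X ^ a)) -exprzDr ?mut_Mk_unit // -(mulrA _ (E ^ (- b))).
by rewrite -exprzDr ?M_unit // [a + b]addrC opprD.
Qed.

Definition hproj (d : int) := lin (fun f : lattice => if deg f == d then M f else 0).

Lemma hproj_homog d d' x : homog d' x -> hproj d x = if d' == d then x else 0.
Proof.
move=> [s [-> s_d]]; rewrite /hproj lin_frame_sum /frame_sum.
case: eqP => [<-|d'_neq_d].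
  by rewrite big_seq [RHS]big_seq; apply: eq_bigr => p ps; rewrite (allP s_d p ps).
rewrite big1_seq // => p [/andP [_ ps]]; rewrite (eqP (allP s_d p ps)).
by case: eqP => // _; rewrite scaler0.
Qed.

Lemma homog_sum_eq0 (I : eqType) (s : seq I) (key : I -> int) (x : I -> F) :
  (forall i, i \in s -> homog (key i) (x i)) -> \sum_(i <- s) x i = 0 ->
  forall d, \sum_(i <- s | key i == d) x i = 0.
Proof.
move=> x_homog sum_eq0 d; have := congr1 (hproj d) sum_eq0.
rewrite /hproj lin0 lin_sum => [|i /x_homog/homog_torus //] proj_eq0.
rewrite -[RHS]proj_eq0 big_mkcond; apply: eq_big_seq => i i_s /=.
by rewrite -/(hproj d _) (hproj_homog d (x_homog i i_s)).
Qed.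

Lemma mutM_shift (f : lattice) (m : int) :
  mutM f * X ^ (- m) = M f * E ^ (- m) * D (deg f - m).
Proof.
rewrite /mutM /mut_twist -mulrA -exprzDr ?mut_Mk_unit // [RHS]mulrA.
by rewrite -[in RHS](mulrA (M f)) -[in RHS]exprzDr ?M_unit // opprB addKr.
Qed.

(* Multiplied by X^-m, the image of the term at f becomes k-homogeneous of
   degree f_k - m, so a relation splits into homogeneous relations. *)
Lemma mutM_inj s : frame_sum mutM s = 0 -> frame_sum M s = 0.
Proof.
move=> sum_eq0.
have [m m_le] : exists m : int, all (fun p : K * lattice => m <= deg p.2) s.
  elim: s {sum_eq0} => [|p s [m m_le]]; first by exists 0.
  exists (Num.min m (deg p.2)); rewrite /= ge_min lexx orbT /=.
  by apply/allP => q qs; rewrite ge_min (allP m_le q qs).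
pose key (p : K * lattice) := deg p.2 - m.
have terms_homog p : p \in s -> homog (key p) (p.1 *: (M p.2 * E ^ (- m) * D (key p))).
  move=> ps; have key_ge0 : 0 <= key p by rewrite subr_ge0 (allP m_le p ps).
  have D_homog := mut_twist_homog `|key p|%N; rewrite gez0_abs // in D_homog.
  have ME_homog : homog (key p) (M p.2 * E ^ (- m)).
    have := homog_monomial (monomialM (monomial_M p.2) (monomialXz (- m) (monomial_M (evec k)) (M_unit _))).
    by rewrite mxE [in X in _ + X]mxE deg_evec_k mulr1.
  by apply/homogZ; have := homogM ME_homog D_homog; rewrite addr0.
have shifted : \sum_(p <- s) p.1 *: (M p.2 * E ^ (- m) * D (key p)) = 0.
  transitivity (frame_sum mutM s * X ^ (- m)); last by rewrite sum_eq0 mul0r.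
  rewrite /frame_sum big_distrl /=; apply: eq_bigr => p _.
  by rewrite -scalerAl mutM_shift.
have ED_unit d : E ^ (- m) * D d \is a GRing.unit.
  by rewrite /mut_twist !unitrMl ?unitrXz ?M_unit ?mut_Mk_unit.
have part_eq0 d : \sum_(p <- s | key p == d) p.1 *: M p.2 = 0.
  have := homog_sum_eq0 terms_homog shifted d.
  rewrite (eq_bigr (fun p => p.1 *: M p.2 * (E ^ (- m) * D d))) => [|p /eqP <-].
    by rewrite -big_distrl /= => /(congr1 (fun y => y / (E ^ (- m) * D d))); rewrite mulrK // mul0r.
  by rewrite -scalerAl !mulrA.
by rewrite /frame_sum (big_group_by s key) big1 // => d _; apply: part_eq0.
Qed.

Lemma mutation_automorphism : exists rho : F -> F,
  [/\ alg_auto rho,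
      rho (M (evec k)) = M (evec k) + M (evec k + g),
      (forall j, j != k -> rho (M (evec j)) = M (evec j)) &
      forall rho', alg_auto rho' ->
        rho' (M (evec k)) = M (evec k) + M (evec k + g) ->
        (forall j, j != k -> rho' (M (evec j)) = M (evec j)) -> rho' =1 rho].
Proof.
pose rho := frame_ext mutM.
have rho_endo : alg_endo rho := frame_ext_endo mutM0 mutMM mutM_inj.
have [rhoD rhoM rho1 rhoZ] := rho_endo.
have rho_M f : rho (M f) = mutM f := frame_ext_M mutM0 mutMM mutM_inj f.
have rho_k : rho E = X by rewrite rho_M mutM_evec_k.
have rho_j j : j != k -> rho (M (evec j)) = M (evec j).
  by move=> j_neq_k; rewrite rho_M mutM_deg0 ?deg_evec_neq.
have rho_Y : rho Y = Y.
  by have [c ->] := mut_factorE; rewrite rhoD rho1 rhoZ rho_M mutM_deg0.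
have rho_surj : forall y, exists x, rho x = y.
  apply: alg_endo_surj rho_endo _ => j; have [->|j_neq_k] := eqVneq j k.
    exists (E * Y^-1); rewrite rhoM alg_endoV ?mut_factor_unit // rho_k rho_Y.
    by rewrite mut_MkE mulrK ?mut_factor_unit.
  by exists (M (evec j)); rewrite rho_j.
exists rho; split=> //.
- apply/alg_autoP; split=> //.
  exact: inj_surj_bijective (frame_ext_inj mutMM mutM_inj) rho_surj.
- move=> rho' /alg_autoP [rho'_endo _] rho'_k rho'_j; apply: alg_endo_eq_evec => // j.
  have [->|j_neq_k] := eqVneq j k; first by rewrite rho'_k rho_k.
  by rewrite rho'_j ?rho_j.
Qed.

End Mutation.

End Frame.

Theorem proposition3p5 (K : fieldType) (F : unitAlgType K) (ell N : nat) (z : K)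
    (M : 'rV[int]_N -> F) (L : 'M[int]_N) (k : 'I_N) (g : 'rV[int]_N) :
  is_Qzeta ell z -> division_ring F ->
  toric_frame_with ell z M L ->
  (forall j : 'I_N, j != k -> (ell%:Z %| bform L g (evec j))%Z) ->
  g 0 k = 0 ->
  forall s : bool,
  exists rho : F -> F,
    [/\ alg_auto rho,
        rho (M (evec k)) = M (evec k) + M (evec k + (if s then g else - g)),
        (forall j : 'I_N, j != k -> rho (M (evec j)) = M (evec j)) &
        forall rho' : F -> F, alg_auto rho' ->
          rho' (M (evec k)) = M (evec k) + M (evec k + (if s then g else - g)) ->
          (forall j : 'I_N, j != k -> rho' (M (evec j)) = M (evec j)) ->
          rho' =1 rho].
Proof.
move=> [ell_gt0 z_prim K_char0 K_gen] F_div [L_skew M0 MM M_indep M_frac] g_orth g_k s.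
have z_neq0 : z != 0 by rewrite (prim_root_eq0 z_prim) -lt0n.
set g' := if s then g else - g.
have g'_orth j : j != k -> (ell%:Z %| bform L g' (evec j))%Z.
  by move=> j_neq_k; rewrite /g'; case: (s); rewrite ?bformNl ?rpredN g_orth.
have g'_k : g' 0 k = 0 by rewrite /g'; case: (s); rewrite ?mxE g_k ?oppr0.
exact: (mutation_automorphism z_neq0 M0 MM K_char0 K_gen M_indep F_div M_frac
  (prim_expr_order z_prim) L_skew g'_orth g'_k).
Qed.
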